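(* Let $G$ be an abelian group and let $Z$ be a finite multiset of elements of $G$ with $\dim(Z)\geqslant1$. Then $$|\Sigma(Z)|\leqslant 2^{2\dim(Z)\left(\log_2\left(\frac{|Z|}{\dim(Z)}\right)+2\right)}=\left(\frac{4|Z|}{\dim(Z)}\right)^{2\dim(Z)}.$$
   Context: $|Z|$ is the size of $Z$ counted with multiplicity. The additive span of $Z$ is $\Sigma(Z)=\{\sum_{z\in Z'}z: Z'\subseteq Z\}$, where $Z'$ ranges over sub-multisets of $Z$. A (multi)set $S$ is dissociated if any two sub-multisets of $S$ with equal sums are equal. $\dim(Z)$ is the size of the largest dissociated sub-multiset of $Z$. *)

From mathcomp Require Import all_boot all_order all_algebra.
Set Implicit Arguments. Unset Strict Implicit. Unset Printing Implicit Defensive.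
Import Order.TTheory GRing.Theory Num.Theory.
Local Open Scope ring_scope.

(* A finite multiset of elements of an abelian group G (zmodType) is
   represented by a sequence Z : seq G (order irrelevant). Sub-multisets of Z
   are exactly the subsequences mask m Z, m a bit mask of length size Z;
   two sub-multisets are equal as multisets iff they are permutations of
   each other (perm_eq). *)

Definition ssum (G : zmodType) (s : seq G) : G := \sum_(x <- s) x.

Definition addspan (G : zmodType) (Z : seq G) : seq G :=
  undup [seq ssum (mask (val m) Z) | m : (size Z).-tuple bool].

Definition dissociated (G : zmodType) (S : seq G) : bool :=
  [forall m1 : (size S).-tuple bool, forall m2 : (size S).-tuple bool,
    (ssum (mask (val m1) S) == ssum (mask (val m2) S)) ==>
    perm_eq (mask (val m1) S) (mask (val m2) S)].

Definition dimZ (G : zmodType) (Z : seq G) : nat :=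
  \max_(m : (size Z).-tuple bool | dissociated (mask (val m) Z))
     size (mask (val m) Z).

From mathcomp Require Import all_boot all_order all_algebra.
Import Order.TTheory GRing.Theory Num.Theory.
Set Implicit Arguments. Unset Strict Implicit. Unset Printing Implicit Defensive.

(* Represent each element of Sigma(Z) by an index set S of least binary weight
   \sum_(i in S) 2 ^ i among those with that sum; these representatives form a
   family F with |F| >= |Sigma(Z)|. If A is shattered by F and P, Q are subsets
   of A with equal sums, pick S in F with S :&: A = P: swapping P for Q inside S
   keeps the sum, so minimality gives weight P <= weight Q; by symmetry the
   weights agree, and binary weights determine the set, so P = Q. So every set shattered by F is dissociated and has at most
   d = dim(Z) elements, and Pajor's form of the Sauer-Shelah lemma yields
   |Sigma(Z)| <= \sum_(k <= d) 'C(|Z|, k) <= (4 |Z| / d) ^ (2 d). *)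

Section Shattering.
Variable T : finType.
Implicit Types (F : {set {set T}}) (A B S U : {set T}) (x : T).

Definition shatters F A :=
  [forall B : {set T}, (B \subset A) ==> [exists S in F, S :&: A == B]].

Definition shattered F := [set A | shatters F A].

Lemma shatteredP F A :
  reflect (forall B, B \subset A -> exists2 S, S \in F & S :&: A = B)
          (A \in shattered F).
Proof.
rewrite inE; apply: (iffP forallP) => [shA B sBA | shA B].
  by have /implyP/(_ sBA)/existsP[S /andP[SF /eqP]] := shA B; exists S.
apply/implyP => /shA[S SF SA_B]; apply/existsP; exists S.
by rewrite SF SA_B eqxx.
Qed.

Lemma set0_shattered F : F != set0 -> set0 \in shattered F.
Proof.
case/set0Pn=> S SF; apply/shatteredP => B; rewrite subset0 => /eqP->.
by exists S; rewrite ?setI0.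
Qed.

Lemma notin_shattered F x A :
  (forall S, S \in F -> x \notin S) -> A \in shattered F -> x \notin A.
Proof.
move=> xF /shatteredP/(_ A (subxx A))[S SF SA_A].
by apply: contra (xF S SF) => xA; move: xA; rewrite -SA_A inE => /andP[].
Qed.

Lemma card_le_shattered_powerset0 F :
  F \subset powerset set0 -> #|F| <= #|shattered F|.
Proof.
move=> sF0; have [->|nzF] := eqVneq F set0; first by rewrite cards0.
rewrite (leq_trans (subset_leq_card sF0)) // card_powerset cards0 card_gt0.
by apply/set0Pn; exists set0; apply: set0_shattered.
Qed.

Section Split.
Variables (F : {set {set T}}) (x : T).

Definition avoiding := [set S in F | x \notin S].
Definition removed := [set S :\ x | S in F & x \in S].

Local Notation F_or := (avoiding :|: removed).
Local Notation F_and := (avoiding :&: removed).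

Lemma card_avoiding_removed : #|F| = #|F_or| + #|F_and|.
Proof.
rewrite cardsUI card_in_imset; last first.
  move=> S1 S2; rewrite !inE => /andP[_ xS1] /andP[_ xS2] eqS.
  by rewrite -(setD1K xS1) eqS setD1K.
rewrite -(cardsID [set S : {set T} | x \in S] F) addnC.
by congr (_ + _); apply: eq_card => S; rewrite !inE andbC.
Qed.

Lemma notin_avoiding_removed S : S \in F_or -> x \notin S.
Proof. by rewrite !inE => /orP[/andP[]|/imsetP[S' _ ->]] //; rewrite !inE eqxx. Qed.

Lemma notin_avoiding_removed_meet S : S \in F_and -> x \notin S.
Proof. by move=> SF; apply: notin_avoiding_removed; rewrite inE (setIP SF).1. Qed.

Lemma avoiding_removed_sub U :
  F \subset powerset U -> F_or \subset powerset (U :\ x).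
Proof.
move=> sFU; apply/subsetP => S SF.
rewrite powersetE subsetD1 notin_avoiding_removed // andbT.
have sU S' : S' \in F -> S' \subset U by move/(subsetP sFU); rewrite powersetE.
move: SF; rewrite !inE => /orP[/andP[SF _]|/imsetP[S' /setIdP[S'F _] ->]].
  exact: sU.
exact: subset_trans (subsetDl _ _) (sU _ S'F).
Qed.

Lemma shattered_avoiding_removed : shattered F_or \subset shattered F.
Proof.
apply/subsetP => A shA; have xA := notin_shattered notin_avoiding_removed shA.
apply/shatteredP => B /(shatteredP _ _ shA)[S SF <-].
move: SF; rewrite !inE => /orP[/andP[SF _]|/imsetP[S' /setIdP[S'F _] ->]].
  by exists S.
exists S' => //.
by apply/setP => y; rewrite !inE; case: eqP => [->|]; rewrite ?(negbTE xA) ?andbF.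
Qed.

Lemma shattered_avoiding_removed_meet A :
  A \in shattered F_and -> x |: A \in shattered F.
Proof.
move=> shA; have xA := notin_shattered notin_avoiding_removed_meet shA.
apply/shatteredP => B sBxA.
have /(shatteredP _ _ shA)[S /setIP[]] : B :\ x \subset A by rewrite subDset.
rewrite !inE => /andP[SF _] /imsetP[S' /setIdP[S'F xS'] defS] /setP eqS.
have [xB|xB] := boolP (x \in B); [exists S' | exists S] => //; apply/setP => y;
  have := eqS y; rewrite defS !inE; case: eqVneq => [->|] //= _.
- by rewrite xS' xB.
- by rewrite (negbTE xB).
Qed.

Lemma card_shattered_avoiding_removed :
  #|shattered F_or| + #|shattered F_and| <= #|shattered F|.
Proof.
have notin_and := notin_shattered notin_avoiding_removed_meet.
have notin_or := notin_shattered notin_avoiding_removed.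
rewrite -[#|shattered F_and|](card_in_imset (f := fun A => x |: A)); last first.
  by move=> A1 A2 /notin_and xA1 /notin_and xA2 eqA; rewrite -(setU1K xA1) eqA setU1K.
have disj : [disjoint shattered F_or & [set x |: A | A in shattered F_and]].
  rewrite disjoints_subset; apply/subsetP => A /notin_or; rewrite inE.
  by apply: contra => /imsetP[A' _ ->]; apply: setU11.
rewrite -cardsUI (disjoint_setI0 disj) cards0 addn0 subset_leq_card //.
rewrite subUset shattered_avoiding_removed; apply/subsetP => _ /imsetP[A shA ->].
exact: shattered_avoiding_removed_meet.
Qed.

End Split.

Lemma card_le_shattered F : #|F| <= #|shattered F|.
Proof.
have [U sFU] : exists U, F \subset powerset U.
  by exists setT; apply/subsetP => S _; rewrite powersetE subsetT.
have [k] := ubnP #|U|; elim: k U F sFU => // k IH U F sFU ltUk.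
have [U0|[x xU]] := set_0Vmem U.
  by apply: card_le_shattered_powerset0; rewrite -U0.
have ltU'k : #|U :\ x| < k by rewrite (cardsD1 x) xU in ltUk.
have sF'U' := avoiding_removed_sub x sFU.
rewrite (card_avoiding_removed F x).
rewrite (leq_trans _ (card_shattered_avoiding_removed F x)) //.
apply: leq_add; apply: IH ltU'k => //.
exact: subset_trans (subsetIl _ _) (subset_trans (subsetUl _ _) sF'U').
Qed.

Lemma card_small_sets d :
  #|[set A : {set T} | #|A| <= d]| <= \sum_(k < d.+1) 'C(#|T|, k).
Proof.
elim: d => [|d IH].
  rewrite big_ord1 -card_draws subset_leq_card //.
  by apply/subsetP => A; rewrite !inE leqn0.
rewrite big_ord_recr /= -card_draws (leq_trans _ (leq_add IH (leqnn _))) //.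
apply: leq_trans (leq_card_setU _ _).1; apply: subset_leq_card.
by apply/subsetP => A; rewrite !inE leq_eqVlt ltnS orbC.
Qed.

Theorem sauer_shelah F d :
  (forall A, A \in shattered F -> #|A| <= d) ->
  #|F| <= \sum_(k < d.+1) 'C(#|T|, k).
Proof.
move=> dimF; apply: leq_trans (card_le_shattered F) (leq_trans _ (card_small_sets d)).
by apply/subset_leq_card/subsetP => A /dimF; rewrite inE.
Qed.

End Shattering.

Lemma leq_exp2rW e m n : m <= n -> m ^ e <= n ^ e.
Proof. by move=> le_mn; elim: e => // e IH; rewrite !expnS leq_mul. Qed.

Lemma ffact_le_expn n k : n ^_ k <= n ^ k.
Proof. by elim: k => // k IH; rewrite ffactnSr expnSr leq_mul ?leq_subr. Qed.

Lemma expn_le_ffact_double d k : k <= d -> d ^ k <= (2 * d) ^_ k.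
Proof.
elim: k => // k IH lt_kd; rewrite ffactnSr expnSr leq_mul ?IH ?(ltnW lt_kd) //.
by rewrite mul2n -addnn -addnBA ?leq_addr ?(ltnW lt_kd).
Qed.

Lemma bin_mul_expn_le n d k :
  k <= d -> d <= n -> 'C(n, k) * d ^ (2 * d) <= n ^ (2 * d) * 'C(2 * d, k).
Proof.
move=> le_kd le_dn.
have le_k2d : k <= 2 * d by rewrite mul2n -addnn (leq_trans le_kd (leq_addr _ _)).
have low : 'C(n, k) * d ^ k <= n ^ k * 'C(2 * d, k).
  rewrite -(leq_pmul2r (fact_gt0 k)) mulnAC bin_ffact -mulnA bin_ffact.
  exact: leq_mul (ffact_le_expn n k) (expn_le_ffact_double le_kd).
have high : d ^ (2 * d - k) <= n ^ (2 * d - k) := leq_exp2rW _ le_dn.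
have splitE m : m ^ (2 * d) = m ^ k * m ^ (2 * d - k) by rewrite -expnD subnKC.
by rewrite !splitE mulnA [in X in _ <= X]mulnAC leq_mul.
Qed.

Lemma sum_bin_mul_expn_le n d :
  d <= n -> (\sum_(k < d.+1) 'C(n, k)) * d ^ (2 * d) <= (4 * n) ^ (2 * d).
Proof.
move=> le_dn; rewrite big_distrl /=.
have termwise (k : 'I_d.+1) : 'C(n, k) * d ^ (2 * d) <= n ^ (2 * d) * 'C(2 * d, k).
  by apply: bin_mul_expn_le; rewrite -ltnS.
apply: leq_trans; first by apply: leq_sum => k _; apply: termwise.
rewrite /= -big_distrr /= expnMn mulnC leq_mul //.
have le_d2d : d.+1 <= (2 * d).+1 by rewrite ltnS mul2n -addnn leq_addr.
have sum_bin2 : \sum_(k < (2 * d).+1) 'C(2 * d, k) = 2 ^ (2 * d).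
  by rewrite -[2]/(1 + 1) expnDn; apply: eq_bigr => k _; rewrite !exp1n !muln1.
rewrite (leq_trans _ (leq_exp2rW _ (isT : 2 <= 4))) // -sum_bin2.
rewrite (big_ord_widen _ (fun k => 'C(2 * d, k)) le_d2d) big_mkcond /=.
by apply: leq_sum => k _; case: ifP.
Qed.

Lemma sum_bits_lt (b : nat -> bool) k : \sum_(i < k) b i * 2 ^ i < 2 ^ k.
Proof.
elim: k => [|k IH]; first by rewrite big_ord0.
rewrite big_ord_recr /= expnS mul2n -addnn -addSn leq_add //.
by rewrite -[leqRHS]mul1n leq_mul2r leq_b1 orbT.
Qed.

Lemma eq_bits_of_sum (b1 b2 : nat -> bool) k :
    \sum_(i < k) b1 i * 2 ^ i = \sum_(i < k) b2 i * 2 ^ i ->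
  forall i, i < k -> b1 i = b2 i.
Proof.
elim: k => // k IH; rewrite !big_ord_recr /= => eq_sum.
have top (b : nat -> bool) : (\sum_(i < k) b i * 2 ^ i + b k * 2 ^ k) %/ 2 ^ k = b k.
  by rewrite addnC divnMDl ?expn_gt0 // divn_small ?addn0 // sum_bits_lt.
have eq_top : b1 k = b2 k.
  by have := congr1 (divn^~ (2 ^ k)) eq_sum; rewrite /= !top; case: (b1 k) (b2 k) => -[].
move: eq_sum; rewrite eq_top => /addIn eq_low i; rewrite ltnS leq_eqVlt.
by case/orP => [/eqP-> | /(IH eq_low)].
Qed.

Section BinaryWeight.
Variable n : nat.

Definition weight (S : {set 'I_n}) : nat := \sum_(i in S) 2 ^ i.

Lemma weight_inj : injective weight.
Proof.
pose bits (S : {set 'I_n}) (i : nat) := i \in [seq val j | j in S].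
have bitsE S (j : 'I_n) : bits S j = (j \in S).
  by rewrite /bits mem_map ?mem_enum //; apply: val_inj.
have weightE S : weight S = \sum_(i < n) bits S i * 2 ^ i.
  rewrite /weight big_mkcond; apply: eq_bigr => j _.
  by rewrite bitsE; case: (j \in S); rewrite ?mul1n.
move=> S1 S2; rewrite !weightE => /eq_bits_of_sum eq_bits; apply/setP => j.
by rewrite -!bitsE eq_bits.
Qed.

End BinaryWeight.

Section SubsetSums.
Variables (G : zmodType) (Z : seq G).
Local Notation n := (size Z).
Local Open Scope ring_scope.
Implicit Types A P Q S : {set 'I_n}.

Definition subsum (S : {set 'I_n}) : G := \sum_(i in S) Z`_i.

Definition min_rep (S : {set 'I_n}) : bool :=
  [forall S', (subsum S' == subsum S) ==> (weight S <= weight S')%N].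

Definition min_reps : {set {set 'I_n}} := [set S | min_rep S].

Lemma ssum_map_uniq (t : seq 'I_n) :
  uniq t -> ssum [seq Z`_i | i : 'I_n <- t] = subsum [set i in t].
Proof.
by move=> uniq_t; rewrite /ssum big_map big_uniq //; apply: eq_bigl => i; rewrite inE.
Qed.

Lemma mask_enum_ord m : mask m Z = [seq Z`_i | i : 'I_n <- mask m (enum 'I_n)].
Proof.
by rewrite map_mask (map_comp (nth 0 Z) val) val_enum_ord -/(mkseq _ _) mkseq_nth.
Qed.

Lemma exists_min_rep S : exists2 S', S' \in min_reps & subsum S' = subsum S.
Proof.
have [S' /eqP eqS' minS'] :=
  @arg_minnP _ S (fun S' => subsum S' == subsum S) (@weight n) (eqxx _).
exists S' => //; rewrite inE; apply/forallP => S''; apply/implyP => /eqP eqS''.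
by apply: minS'; rewrite eqS'' eqS'.
Qed.

Lemma size_addspan_le : (size (addspan Z) <= #|min_reps|)%N.
Proof.
rewrite cardE -(size_map subsum) uniq_leq_size ?undup_uniq // => x.
rewrite mem_undup => /mapP[m _ ->].
rewrite mask_enum_ord ssum_map_uniq ?mask_uniq ?enum_uniq //.
have [S' S'rep <-] := exists_min_rep [set i in mask m (enum 'I_n)].
by apply: map_f; rewrite mem_enum.
Qed.

Lemma weight_le_shattered A P Q :
    A \in shattered min_reps -> P \subset A -> Q \subset A ->
  subsum P = subsum Q -> (weight P <= weight Q)%N.
Proof.
move=> shA sPA sQA eqPQ; have [S Srep SA_P] := shatteredP _ _ shA P sPA.
set S' := (S :\: A) :|: Q.
have S'A_Q : S' :&: A = Q.
  by rewrite setIUl setIDAC setDIl setDv setI0 set0U; apply/setIidPl.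
have S'A_SA : S' :\: A = S :\: A.
  rewrite setDUl setDDl setUid.
  by move: sQA; rewrite -setD_eq0 => /eqP->; rewrite setU0.
have eq_sum : subsum S' = subsum S.
  rewrite /subsum (big_setID (A := S') A) (big_setID (A := S) A).
  by rewrite S'A_Q S'A_SA SA_P -/(subsum P) -/(subsum Q) eqPQ.
move: Srep; rewrite inE => /forallP/(_ S'); rewrite eq_sum eqxx /=.
rewrite /weight (big_setID (A := S') A) (big_setID (A := S) A).
by rewrite S'A_Q S'A_SA SA_P leq_add2r.
Qed.

Lemma shattered_subsum_inj A :
  A \in shattered min_reps -> {in powerset A &, injective subsum}.
Proof.
move=> shA P Q; rewrite !powersetE => sPA sQA eqPQ; apply: (@weight_inj n).
by apply/eqP; rewrite eqn_leq !(weight_le_shattered shA) ?eqPQ.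
Qed.

Lemma card_le_dimZ A : {in powerset A &, injective subsum} -> (#|A| <= dimZ Z)%N.
Proof.
move=> injA; pose m : n.-tuple bool := [tuple i \in A | i < n].
set t := mask m (enum 'I_n).
have uniq_t : uniq t by rewrite mask_uniq ?enum_uniq.
have t_A : t =i A by move=> i; rewrite /t -filter_mask mem_filter mem_enum andbT.
have size_mZ : size (mask m Z) = #|A|.
  by rewrite mask_enum_ord size_map -(card_uniqP uniq_t); apply: eq_card.
rewrite -size_mZ; apply: leq_bigmax_cond.
apply/forallP => m1; apply/forallP => m2; apply/implyP.
have maskE m' : mask m' (mask m Z) = [seq Z`_i | i : 'I_n <- mask m' t].
  by rewrite mask_enum_ord -map_mask.
rewrite !maskE !ssum_map_uniq ?mask_uniq ?enum_uniq // => /eqP eq_sum.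
have subA m' : [set i in mask m' t] \in powerset A.
  by rewrite powersetE; apply/subsetP => i; rewrite inE -t_A; apply: mem_mask.
have /setP eqS := injA _ _ (subA m1) (subA m2) eq_sum.
apply/perm_map/uniq_perm; rewrite ?mask_uniq ?enum_uniq // => i.
by have := eqS i; rewrite !inE.
Qed.

Lemma dimZ_le_size : (dimZ Z <= n)%N.
Proof.
apply/bigmax_leqP => m _.
by rewrite size_mask ?size_tuple // -[leqRHS](size_tuple m) count_size.
Qed.

End SubsetSums.

Local Open Scope ring_scope.

Theorem corollary3p6 (G : zmodType) (Z : seq G) :
  (1 <= dimZ Z)%N ->
  ((size (addspan Z))%:R : rat)
    <= ((4 * size Z)%:R / (dimZ Z)%:R) ^+ (2 * dimZ Z).
Proof.
move=> dim_gt0; set d := dimZ Z.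
have card_sh A : A \in shattered (min_reps Z) -> (#|A| <= d)%N.
  by move=> shA; apply/card_le_dimZ/shattered_subsum_inj.
have := leq_trans (size_addspan_le Z) (sauer_shelah card_sh).
rewrite card_ord => le_span.
rewrite expr_div_n ler_pdivlMr ?exprn_gt0 ?ltr0n // -!natrX -natrM ler_nat.
exact: leq_trans (leq_mul le_span (leqnn _)) (sum_bin_mul_expn_le (dimZ_le_size Z)).
Qed.
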